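(* Let $J'=(z_w,z_w')$ be a nonempty open interval, let $r:J'\to\mathbb{R}$ be differentiable, non-increasing, with $r(z)\neq 0$ and $|r(z)|<1$ for all $z\in J'$, and let $h:J'\to\mathbb{R}$ be differentiable with $\dot h(z)=1+h(z)^2-2r(z)h(z)$ on $J'$, having exactly one zero $z_*\in J'$. Let $G(z)=z-\dfrac{2h(z)}{2+h(z)^2-2r(z)h(z)}$. Then for every initial guess $z_0\in J'$ the iteration $z_{n+1}=G(z_n)$ is well defined and the sequence $(z_n)$ converges monotonically to $z_*$.
   Context: $\dot{}$ denotes differentiation with respect to $z$. ''Converges monotonically'' means all iterates lie in $J'$, the sequence is monotone, and its limit is $z_*$. *)

From Stdlib Require Import Reals.
Open Scope R_scope.

Definition Gdenom (r h : R -> R) (z : R) : R := 2 + (h z)^2 - 2 * r z * h z.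
Definition Gmap (r h : R -> R) (z : R) : R := z - 2 * h z / Gdenom r h z.

Fixpoint Giter (r h : R -> R) (z0 : R) (n : nat) : R :=
  match n with
  | O => z0
  | S k => Gmap r h (Giter r h z0 k)
  end.

(* Since |r| < 1, h' = 1 + h^2 - 2 r h is positive, so h is increasing and changes sign only
   at z_*; moreover the denominator of G equals 1 + h' > 1.  A direct computation using the
   Riccati equation gives
     G' = ((h' - 1)^2 + 2 h^2 (h' - 2 r')) / (1 + h')^2 >= 0,
   because r' <= 0.  Hence G is nondecreasing, fixes z_*, and moves every point towards z_*
   without overshooting: the iterates are monotone and trapped between z_0 and z_*.  Their
   limit lies in J', so by continuity it is a fixed point of G, i.e. a zero of h, i.e. z_*. *)

From Stdlib Require Import Reals Lra Psatz ClassicalEpsilon.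
From Coquelicot Require Import Coquelicot.
Open Scope R_scope.

Lemma derivable_pt_lim_choice (f : R -> R) (a b : R) :
  (forall z, a < z < b -> exists l, derivable_pt_lim f z l) ->
  exists f', forall z, a < z < b -> derivable_pt_lim f z (f' z).
Proof.
  intros Hf. exists (fun z => epsilon (inhabits 0) (derivable_pt_lim f z)).
  intros z Hz. now apply epsilon_spec, Hf.
Qed.

Lemma derive_nonpos_of_nonincreasing (f : R -> R) (a b z l : R) :
  (forall x y, a < x < b -> a < y < b -> x <= y -> f y <= f x) ->
  a < z < b -> derivable_pt_lim f z l -> l <= 0.
Proof.
  intros Hdec Hz Hl. destruct (Rle_lt_dec l 0) as [|Hpos]; [assumption | exfalso].
  destruct (Hl l Hpos) as [[d Hd] Hdl]; simpl in Hdl.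
  set (e := Rmin (d / 2) ((b - z) / 2)).
  assert (He : 0 < e) by (apply Rmin_glb_lt; lra).
  assert (He1 : e <= d / 2) by apply Rmin_l.
  assert (He2 : e <= (b - z) / 2) by apply Rmin_r.
  assert (Hquot := Hdl e ltac:(lra) ltac:(rewrite Rabs_right; lra)).
  assert (Hle : f (z + e) <= f z) by (apply Hdec; lra).
  assert (Hq : (f (z + e) - f z) / e <= 0).
  { unfold Rdiv. assert (0 < / e) by now apply Rinv_0_lt_compat. nra. }
  apply Rabs_def2 in Hquot. lra.
Qed.

Lemma nondecreasing_of_derive_nonneg (f f' : R -> R) (a b : R) :
  (forall c, a < c < b -> derivable_pt_lim f c (f' c)) ->
  (forall c, a < c < b -> 0 <= f' c) ->
  forall x y, a < x < b -> a < y < b -> x <= y -> f x <= f y.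
Proof.
  intros Hf Hf' x y Hx Hy [Hxy | <-]; [| lra].
  destruct (MVT_cor2 f f' x y Hxy) as [c [Hc Hcxy]].
  { intros c Hc. apply Hf. lra. }
  assert (0 <= f' c) by (apply Hf'; lra). nra.
Qed.

Lemma increasing_of_derive_pos (f f' : R -> R) (a b : R) :
  (forall c, a < c < b -> derivable_pt_lim f c (f' c)) ->
  (forall c, a < c < b -> 0 < f' c) ->
  forall x y, a < x < b -> a < y < b -> x < y -> f x < f y.
Proof.
  intros Hf Hf' x y Hx Hy Hxy.
  destruct (MVT_cor2 f f' x y Hxy) as [c [Hc Hcxy]].
  { intros c Hc. apply Hf. lra. }
  assert (0 < f' c) by (apply Hf'; lra). nra.
Qed.

Lemma Un_cv_const (c : R) : Un_cv (fun _ => c) c.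
Proof.
  intros eps Heps. exists 0%nat. intros n _.
  unfold Rdist. rewrite Rminus_diag, Rabs_R0. exact Heps.
Qed.

Lemma monotone_bounded_cv (u : nat -> R) (m M : R) :
  Un_growing u \/ Un_decreasing u -> (forall n, m <= u n <= M) ->
  exists L, m <= L <= M /\ Un_cv u L.
Proof.
  intros Hmono Hb.
  assert (Hcv : exists L, Un_cv u L).
  { destruct Hmono as [Hgr | Hdecr].
    - destruct (growing_cv u Hgr) as [L HL]; [| now exists L].
      exists M. intros x [n ->]. apply Hb.
    - destruct (decreasing_cv u Hdecr) as [L HL]; [| now exists L].
      exists (- m). intros x [n ->]. unfold opp_seq. specialize (Hb n). lra. }
  destruct Hcv as [L HL]. exists L. split; [split |]; [| | exact HL].
  - apply (Rle_cv_lim (Un := fun _ => m) (Vn := u)); [apply Hb | apply Un_cv_const | exact HL].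
  - apply (Rle_cv_lim (Un := u) (Vn := fun _ => M)); [apply Hb | exact HL | apply Un_cv_const].
Qed.

Section MonotoneIteration.

Variables (a b p : R) (G : R -> R) (u : nat -> R).

Hypothesis p_in : a < p < b.
Hypothesis G_nondecreasing :
  forall x y, a < x < b -> a < y < b -> x <= y -> G x <= G y.
Hypothesis G_fixed : G p = p.
Hypothesis G_le_self : forall z, a < z < b -> p <= z -> G z <= z.
Hypothesis G_ge_self : forall z, a < z < b -> z <= p -> z <= G z.
Hypothesis G_continuous : forall z, a < z < b -> continuity_pt G z.
Hypothesis G_fixed_unique : forall z, a < z < b -> G z = z -> z = p.
Hypothesis u0_in : a < u 0%nat < b.
Hypothesis u_succ : forall n, u (S n) = G (u n).

Lemma iterates_above : p <= u 0%nat -> forall n, p <= u n <= u 0%nat.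
Proof.
  intros Hp0 n. induction n as [| n IH]; [lra |].
  rewrite u_succ. split.
  - rewrite <- G_fixed. apply G_nondecreasing; lra.
  - assert (G (u n) <= u n) by (apply G_le_self; lra). lra.
Qed.

Lemma iterates_below : u 0%nat <= p -> forall n, u 0%nat <= u n <= p.
Proof.
  intros Hp0 n. induction n as [| n IH]; [lra |].
  rewrite u_succ. split.
  - assert (u n <= G (u n)) by (apply G_ge_self; lra). lra.
  - rewrite <- G_fixed. apply G_nondecreasing; lra.
Qed.

Lemma iterates_monotone : Un_growing u \/ Un_decreasing u.
Proof.
  destruct (Rle_dec p (u 0%nat)) as [Hp0 | Hp0]; [right | left]; intros n;
    rewrite u_succ.
  - assert (Hn := iterates_above Hp0 n). apply G_le_self; lra.
  - assert (Hn := iterates_below ltac:(lra) n). apply G_ge_self; lra.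
Qed.

Lemma iterates_between : forall n, Rmin (u 0%nat) p <= u n <= Rmax (u 0%nat) p.
Proof.
  intros n. destruct (Rle_dec p (u 0%nat)) as [Hp0 | Hp0].
  - rewrite Rmin_right, Rmax_left by lra. now apply iterates_above.
  - rewrite Rmin_left, Rmax_right by lra. apply iterates_below. lra.
Qed.

Lemma hull_in_interval : a < Rmin (u 0%nat) p /\ Rmax (u 0%nat) p < b.
Proof. split; [apply Rmin_glb_lt | apply Rmax_lub_lt]; lra. Qed.

Lemma iterates_in_interval : forall n, a < u n < b.
Proof.
  intros n. assert (Hn := iterates_between n). assert (Hhull := hull_in_interval). lra.
Qed.

Lemma limit_of_iterates_fixed (L : R) : Un_cv u L -> a < L < b -> L = p.
Proof.
  intros HL HLin. apply G_fixed_unique; [exact HLin |].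
  apply (UL_sequence (fun n => G (u n))).
  - exact (continuity_seq G u L (G_continuous L HLin) HL).
  - intros eps Heps. destruct (HL eps Heps) as [N HN]. exists N.
    intros n Hn. rewrite <- u_succ. apply HN. lia.
Qed.

Lemma iterates_cv : Un_cv u p.
Proof.
  destruct (monotone_bounded_cv u _ _ iterates_monotone iterates_between)
    as [L [HLb HL]].
  assert (Hhull := hull_in_interval).
  rewrite <- (limit_of_iterates_fixed L HL) by lra. exact HL.
Qed.

Lemma monotone_iteration_cv :
  (forall n, a < u n < b) /\ (Un_growing u \/ Un_decreasing u) /\ Un_cv u p.
Proof.
  split; [| split].
  - exact iterates_in_interval.
  - exact iterates_monotone.
  - exact iterates_cv.
Qed.

End MonotoneIteration.

Definition riccati_rhs (r h : R -> R) (z : R) : R := 1 + h z ^ 2 - 2 * r z * h z.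

Lemma Gdenom_riccati (r h : R -> R) (z : R) : Gdenom r h z = 1 + riccati_rhs r h z.
Proof. unfold Gdenom, riccati_rhs. ring. Qed.

Lemma riccati_rhs_pos (r h : R -> R) (z : R) : -1 < r z < 1 -> 0 < riccati_rhs r h z.
Proof.
  intros Hr. unfold riccati_rhs.
  assert (0 <= (h z - r z) ^ 2) by apply pow2_ge_0. nra.
Qed.

Lemma Gmap_derivable_pt_lim (r h : R -> R) (z rd : R) :
  derivable_pt_lim h z (riccati_rhs r h z) -> derivable_pt_lim r z rd ->
  Gdenom r h z <> 0 ->
  derivable_pt_lim (Gmap r h) z
    (((riccati_rhs r h z - 1) ^ 2 + 2 * h z ^ 2 * (riccati_rhs r h z - 2 * rd))
     / Gdenom r h z ^ 2).
Proof.
  intros Hh Hr HD. apply is_derive_Reals in Hh, Hr.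
  apply is_derive_Reals. unfold Gmap, Gdenom in *. auto_derive.
  - repeat split; try (eexists; eassumption). exact HD.
  - replace (Derive (fun x => h x) z) with (riccati_rhs r h z)
      by (symmetry; now apply is_derive_unique).
    replace (Derive (fun x => r x) z) with rd by (symmetry; now apply is_derive_unique).
    unfold riccati_rhs. field. exact HD.
Qed.

Section NewtonMap.

Variables (zw zw' zs : R) (r rd h : R -> R).

Hypothesis r_derivative : forall z, zw < z < zw' -> derivable_pt_lim r z (rd z).
Hypothesis r_nonincreasing :
  forall x y, zw < x < zw' -> zw < y < zw' -> x <= y -> r y <= r x.
Hypothesis r_bounds : forall z, zw < z < zw' -> -1 < r z < 1.
Hypothesis h_riccati : forall z, zw < z < zw' -> derivable_pt_lim h z (riccati_rhs r h z).
Hypothesis zs_in : zw < zs < zw'.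
Hypothesis h_zs : h zs = 0.
Hypothesis h_zero_unique : forall z, zw < z < zw' -> h z = 0 -> z = zs.

Lemma Gdenom_gt_1 (z : R) : zw < z < zw' -> 1 < Gdenom r h z.
Proof.
  intros Hz. rewrite Gdenom_riccati.
  assert (0 < riccati_rhs r h z) by (apply riccati_rhs_pos, r_bounds, Hz). lra.
Qed.

Lemma Gmap_nondecreasing (x y : R) :
  zw < x < zw' -> zw < y < zw' -> x <= y -> Gmap r h x <= Gmap r h y.
Proof.
  apply (nondecreasing_of_derive_nonneg _
    (fun z => ((riccati_rhs r h z - 1) ^ 2 + 2 * h z ^ 2 * (riccati_rhs r h z - 2 * rd z))
              / Gdenom r h z ^ 2)).
  - intros z Hz. apply Gmap_derivable_pt_lim; auto.
    assert (1 < Gdenom r h z) by now apply Gdenom_gt_1. lra.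
  - intros z Hz.
    assert (0 < riccati_rhs r h z) by (apply riccati_rhs_pos, r_bounds, Hz).
    assert (rd z <= 0).
    { apply (derive_nonpos_of_nonincreasing r zw zw' z); auto. }
    assert (1 < Gdenom r h z) by now apply Gdenom_gt_1.
    unfold Rdiv. apply Rmult_le_pos.
    + assert (0 <= h z ^ 2) by apply pow2_ge_0.
      assert (0 <= (riccati_rhs r h z - 1) ^ 2) by apply pow2_ge_0. nra.
    + left. apply Rinv_0_lt_compat, pow_lt. lra.
Qed.

Lemma h_increasing (x y : R) : zw < x < zw' -> zw < y < zw' -> x < y -> h x < h y.
Proof.
  apply (increasing_of_derive_pos h (riccati_rhs r h)); [exact h_riccati |].
  intros c Hc. apply riccati_rhs_pos, r_bounds, Hc.
Qed.

Lemma Gmap_zs : Gmap r h zs = zs.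
Proof. unfold Gmap. rewrite h_zs. unfold Rdiv. ring. Qed.

Lemma Gmap_le_self (z : R) : zw < z < zw' -> zs <= z -> Gmap r h z <= z.
Proof.
  intros Hz [Hlt | <-]; [| rewrite Gmap_zs; lra].
  assert (0 < h z) by (rewrite <- h_zs; now apply h_increasing).
  assert (1 < Gdenom r h z) by now apply Gdenom_gt_1.
  assert (0 < 2 * h z / Gdenom r h z) by (apply Rdiv_lt_0_compat; lra).
  unfold Gmap. lra.
Qed.

Lemma Gmap_ge_self (z : R) : zw < z < zw' -> z <= zs -> z <= Gmap r h z.
Proof.
  intros Hz [Hlt | ->]; [| rewrite Gmap_zs; lra].
  assert (h z < 0) by (rewrite <- h_zs; now apply h_increasing).
  assert (1 < Gdenom r h z) by now apply Gdenom_gt_1.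
  assert (0 < - (2 * h z) / Gdenom r h z) by (apply Rdiv_lt_0_compat; lra).
  unfold Gmap, Rdiv in *. lra.
Qed.

Lemma Gmap_fixed_unique (z : R) : zw < z < zw' -> Gmap r h z = z -> z = zs.
Proof.
  intros Hz Hfix. apply h_zero_unique; [exact Hz |].
  assert (1 < Gdenom r h z) by now apply Gdenom_gt_1.
  unfold Gmap in Hfix.
  assert (Hq : 2 * h z / Gdenom r h z = 0) by lra.
  apply Rmult_integral in Hq as [Hq | Hq]; [lra |].
  exfalso. revert Hq. apply Rinv_neq_0_compat. lra.
Qed.

Lemma Gmap_continuous (z : R) : zw < z < zw' -> continuity_pt (Gmap r h) z.
Proof.
  intros Hz. apply derivable_continuous_pt. eexists.
  apply Gmap_derivable_pt_lim; auto.
  assert (1 < Gdenom r h z) by now apply Gdenom_gt_1. lra.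
Qed.

Lemma Giter_cv (z0 : R) : zw < z0 < zw' ->
  (forall n, zw < Giter r h z0 n < zw' /\ Gdenom r h (Giter r h z0 n) <> 0) /\
  (Un_growing (Giter r h z0) \/ Un_decreasing (Giter r h z0)) /\
  Un_cv (Giter r h z0) zs.
Proof.
  intros Hz0.
  destruct (monotone_iteration_cv zw zw' zs (Gmap r h) (Giter r h z0)
    zs_in Gmap_nondecreasing Gmap_zs Gmap_le_self Gmap_ge_self Gmap_continuous
    Gmap_fixed_unique Hz0 (fun n => eq_refl)) as [Hin Hmono_cv].
  split; [intros n; split | exact Hmono_cv].
  - apply Hin.
  - assert (1 < Gdenom r h (Giter r h z0 n)) by apply Gdenom_gt_1, Hin. lra.
Qed.

End NewtonMap.

Theorem mainTheorem4 (zw zw' : R) (r h : R -> R) (zs : R) :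
  zw < zw' ->
  (forall z, zw < z < zw' -> exists l, derivable_pt_lim r z l) ->
  (forall x y, zw < x < zw' -> zw < y < zw' -> x <= y -> r y <= r x) ->
  (forall z, zw < z < zw' -> r z <> 0 /\ Rabs (r z) < 1) ->
  (forall z, zw < z < zw' ->
     derivable_pt_lim h z (1 + (h z)^2 - 2 * r z * h z)) ->
  zw < zs < zw' -> h zs = 0 ->
  (forall z, zw < z < zw' -> h z = 0 -> z = zs) ->
  forall z0, zw < z0 < zw' ->
    (forall n, zw < Giter r h z0 n < zw' /\ Gdenom r h (Giter r h z0 n) <> 0) /\
    (Un_growing (Giter r h z0) \/ Un_decreasing (Giter r h z0)) /\
    Un_cv (Giter r h z0) zs.
Proof.
  intros _ Hr Hdec Hr1 Hh Hzs Hhzs Huniq z0 Hz0.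
  destruct (derivable_pt_lim_choice r zw zw' Hr) as [rd Hrd].
  assert (Hrb : forall z, zw < z < zw' -> -1 < r z < 1).
  { intros z Hz. destruct (Hr1 z Hz) as [_ Habs]. apply Rabs_def2 in Habs. lra. }
  exact (Giter_cv zw zw' zs r rd h Hrd Hdec Hrb Hh Hzs Hhzs Huniq z0 Hz0).
Qed.
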